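(* For every $x>0$, $$\frac{L(x,1)^2-G(x,1)^2}{2L(x,1)^2}\le \frac{A(x,1)-L(x,1)}{L(x,1)}\le \log K(x).$$
   Context: $A(x,1)=\frac{x+1}{2}$, $G(x,1)=\sqrt{x}$, $L(x,1)=\frac{x-1}{\log x}$ for $x\ne1$ and $L(1,1)=1$, and $K(x)=\frac{(x+1)^2}{4x}$. *)

From Stdlib Require Import Reals.
Open Scope R_scope.

Definition Amean (x : R) : R := (x + 1) / 2.
Definition Gmean (x : R) : R := sqrt x.
Definition Lmean (x : R) : R :=
  if Req_EM_T x 1 then 1 else (x - 1) / ln x.
Definition Kfun (x : R) : R := (x + 1) ^ 2 / (4 * x).

From Stdlib Require Import Reals Lra.
From Coquelicot Require Import Coquelicot.
Open Scope R_scope.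
Set Bullet Behavior "Strict Subproofs".

(* Left inequality: it is equivalent to 3L^2 - 2AL - G^2 <= 0.  The quadratic
   q(L) = 3L^2 - 2AL - G^2 is convex with q(0) <= 0 and q((A+G)/2) <= 0, so it
   suffices to know L <= (A+G)/2.  Writing x = t^2, this bound becomes the
   classical ln t >= 2(t-1)/(t+1) for t >= 1 (reversed for t <= 1).

   Right inequality: for x <> 1 it is equivalent to (x-1) F(x) >= 0 with
   F(x) = 2(x-1)(ln K(x) + 1) - (x+1) ln x.  One has F(1) = F'(1) = 0 and
   F''(x) = (x-1)(x^2+6x+1)/(x^2(x+1)^2), so F' is minimal at 1, hence
   F' >= 0, so F is nondecreasing and changes sign at 1. *)

Lemma nondecreasing_on (f df : R -> R) (x y : R) :
  x <= y ->
  (forall c, x <= c <= y -> is_derive f c (df c)) ->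
  (forall c, x < c < y -> 0 <= df c) -> f x <= f y.
Proof.
  intros hxy hder hpos.
  destruct (Req_dec x y) as [<-|hne]; [lra|].
  destruct (MVT_cor2 f df x y) as [c [hdiff hc]]; [lra| |].
  - intros c hc; apply is_derive_Reals, hder; lra.
  - assert (0 <= df c) by (apply hpos; lra). nra.
Qed.

Lemma sign_of_nondecreasing (f df : R -> R) (a x : R) :
  (forall c, 0 < c -> is_derive f c (df c)) ->
  (forall c, 0 < c -> 0 <= df c) ->
  0 < a -> f a = 0 -> 0 < x -> 0 <= (x - a) * f x.
Proof.
  intros hder hpos ha hfa hx.
  destruct (Rle_or_lt a x) as [hax|hxa].
  - assert (f a <= f x).
    { apply (nondecreasing_on f df); [lra| |]; intros c hc;
        [apply hder|apply hpos]; lra. }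
    nra.
  - assert (f x <= f a).
    { apply (nondecreasing_on f df); [lra| |]; intros c hc;
        [apply hder|apply hpos]; lra. }
    nra.
Qed.

Lemma min_of_derivative_sign (f df : R -> R) (a x : R) :
  (forall c, 0 < c -> is_derive f c (df c)) ->
  (forall c, 0 < c -> 0 <= (c - a) * df c) ->
  0 < a -> 0 < x -> f a <= f x.
Proof.
  intros hder hsign ha hx.
  destruct (Rle_or_lt a x) as [hax|hxa].
  - apply (nondecreasing_on f df); [lra| |].
    + intros c hc; apply hder; lra.
    + intros c hc. assert (0 <= (c - a) * df c) by (apply hsign; lra).
      apply (Rmult_le_reg_l (c - a)); lra.
  - assert (- f x <= - f a); [|lra].
    apply (nondecreasing_on (fun c => - f c) (fun c => - df c)); [lra| |].
    + intros c hc. exact (is_derive_opp f c (df c) (hder c ltac:(lra))).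
    + intros c hc. assert (0 <= (c - a) * df c) by (apply hsign; lra).
      apply (Rmult_le_reg_l (a - c)); lra.
Qed.

(* ln t - 2(t-1)/(t+1) has derivative (t-1)^2/(t(t+1)^2) >= 0 and vanishes
   at 1, so it has the sign of t - 1. *)
Lemma ln_vs_rational_sign (t : R) :
  0 < t -> 0 <= (t - 1) * (ln t - 2 * (t - 1) / (t + 1)).
Proof.
  intro ht.
  apply (sign_of_nondecreasing (fun t => ln t - 2 * (t - 1) / (t + 1))
           (fun t => (t - 1) ^ 2 / (t * (t + 1) ^ 2))); [| |lra| |exact ht].
  - intros c hc. auto_derive; [repeat split; lra|]. field; lra.
  - intros c hc. apply Rdiv_le_0_compat; [apply pow2_ge_0|].
    apply Rmult_lt_0_compat; nra.
  - cbv beta. rewrite ln_1. field.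
Qed.

Lemma Lmean_ne1 (x : R) : x <> 1 -> Lmean x = (x - 1) / ln x.
Proof. intro h. unfold Lmean. destruct (Req_EM_T x 1); tauto. Qed.

Lemma ln_sign (x : R) : 0 < x -> x <> 1 -> 0 < (x - 1) * ln x.
Proof.
  intros hx h1.
  destruct (Rlt_or_le x 1) as [h|h].
  - assert (ln x < 0) by (rewrite <- ln_1; apply ln_increasing; lra). nra.
  - assert (0 < ln x) by (rewrite <- ln_1; apply ln_increasing; lra). nra.
Qed.

Lemma Lmean_pos (x : R) : 0 < x -> 0 < Lmean x.
Proof.
  intro hx. unfold Lmean. destruct (Req_EM_T x 1) as [_|h1]; [lra|].
  pose proof (ln_sign x hx h1).
  assert (ln x <> 0) by (intro e; rewrite e in *; lra).
  replace ((x - 1) / ln x) with ((x - 1) * ln x / (ln x * ln x)) by (field; auto).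
  apply Rdiv_lt_0_compat; nra.
Qed.

(* The logarithmic mean is at most the mean of the arithmetic and geometric
   means; with x = t^2 the right-hand side is (t+1)^2/4. *)
Lemma Lmean_le_AG (x : R) : 0 < x -> Lmean x <= (Amean x + Gmean x) / 2.
Proof.
  intro hx. unfold Amean, Gmean.
  destruct (Req_dec x 1) as [->|h1].
  - unfold Lmean. destruct (Req_EM_T 1 1); [|lra]. rewrite sqrt_1. lra.
  - rewrite (Lmean_ne1 x h1).
    set (t := sqrt x).
    assert (ht : 0 < t) by (apply sqrt_lt_R0; lra).
    assert (hxt : x = t * t) by (unfold t; rewrite sqrt_sqrt; lra).
    assert (ht1 : t <> 1) by (intro e; apply h1; rewrite hxt, e; ring).
    assert (hl : ln x = 2 * ln t) by (rewrite hxt, ln_mult by lra; ring).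
    pose proof (ln_sign t ht ht1) as hs.
    pose proof (ln_vs_rational_sign t ht) as hv.
    assert (hkey : 2 * (t - 1) ^ 2 <= (t + 1) * ((t - 1) * ln t)).
    { replace ((t + 1) * ((t - 1) * ln t))
        with ((t + 1) * ((t - 1) * (ln t - 2 * (t - 1) / (t + 1)))
              + 2 * (t - 1) ^ 2) by (field; lra).
      nra. }
    rewrite hl, hxt.
    apply (Rmult_le_reg_r (2 * ((t - 1) * ln t))); [lra|].
    replace ((t * t - 1) / (2 * ln t) * (2 * ((t - 1) * ln t)))
      with ((t - 1) ^ 2 * (t + 1)) by (field; intro e; rewrite e in hs; lra).
    nra.
Qed.

(* The convex quadratic 3L^2 - 2AL - G^2 is <= 0 at L = 0 and at
   L = (A+G)/2 (where it equals -(A-G)^2/4), hence on the whole segment. *)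
Lemma quadratic_nonpos (A G L : R) :
  0 < A + G -> 0 <= L -> L <= (A + G) / 2 -> 3 * L ^ 2 - 2 * A * L - G ^ 2 <= 0.
Proof.
  intros hAG hL hLM.
  set (M := (A + G) / 2) in *.
  assert (hconv : 4 * M * (3 * L ^ 2 - 2 * A * L - G ^ 2)
                  = - (L * (A - G) ^ 2) - 4 * ((M - L) * G ^ 2)
                    - 12 * (L * M * (M - L))) by (unfold M; field).
  assert (hM : 0 < M) by (unfold M; lra).
  assert (0 <= L * (A - G) ^ 2) by (apply Rmult_le_pos; [lra|apply pow2_ge_0]).
  assert (0 <= (M - L) * G ^ 2) by (apply Rmult_le_pos; [lra|apply pow2_ge_0]).
  assert (0 <= L * M * (M - L)) by (apply Rmult_le_pos; [nra|lra]).
  apply (Rmult_le_reg_l (4 * M)); lra.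
Qed.

Lemma left_ineq_of_quadratic (A G L : R) :
  0 < L -> 3 * L ^ 2 - 2 * A * L - G ^ 2 <= 0 ->
  (L ^ 2 - G ^ 2) / (2 * L ^ 2) <= (A - L) / L.
Proof.
  intros hL hq.
  apply Rminus_le.
  replace ((L ^ 2 - G ^ 2) / (2 * L ^ 2) - (A - L) / L)
    with (- ((2 * A * L + G ^ 2 - 3 * L ^ 2) / (2 * L ^ 2))) by (field; lra).
  assert (0 <= (2 * A * L + G ^ 2 - 3 * L ^ 2) / (2 * L ^ 2))
    by (apply Rdiv_le_0_compat; [lra|nra]).
  lra.
Qed.

Lemma ln_Kfun_1 : ln (Kfun 1) = 0.
Proof. unfold Kfun. replace ((1 + 1) ^ 2 / (4 * 1)) with 1 by field. apply ln_1. Qed.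

(* The right inequality, cleared of denominators, is 0 <= (x-1) F(x) with
   F = log_gap; log_gap_d1 and log_gap_d2 are its first two derivatives. *)
Definition log_gap (x : R) : R := 2 * (x - 1) * (ln (Kfun x) + 1) - (x + 1) * ln x.

Definition log_gap_d1 (x : R) : R :=
  2 * (ln (Kfun x) + 1) + 2 * (x - 1) * (2 / (x + 1) - 1 / x) - ln x - (x + 1) / x.

Definition log_gap_d2 (x : R) : R := (x - 1) * (x ^ 2 + 6 * x + 1) / (x ^ 2 * (x + 1) ^ 2).

Lemma is_derive_log_gap (x : R) : 0 < x -> is_derive log_gap x (log_gap_d1 x).
Proof.
  intro hx. unfold log_gap, log_gap_d1, Kfun.
  auto_derive.
  - repeat split; try lra.
    apply Rmult_lt_0_compat; [nra|apply Rinv_0_lt_compat; lra].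
  - replace ((x + 1) * ((x + 1) * 1) * / (4 * x)) with ((x + 1) ^ 2 / (4 * x))
      by (unfold Rdiv; ring).
    field; lra.
Qed.

Lemma is_derive_log_gap_d1 (x : R) : 0 < x -> is_derive log_gap_d1 x (log_gap_d2 x).
Proof.
  intro hx. unfold log_gap_d1, log_gap_d2, Kfun.
  auto_derive.
  - repeat split; try lra.
    apply Rmult_lt_0_compat; [nra|apply Rinv_0_lt_compat; lra].
  - field; lra.
Qed.

(* F'' has the sign of x - 1 and F'(1) = 0, so F' >= 0 on (0, +oo). *)
Lemma log_gap_d1_nonneg (x : R) : 0 < x -> 0 <= log_gap_d1 x.
Proof.
  intro hx.
  replace 0 with (log_gap_d1 1)
    by (unfold log_gap_d1; rewrite ln_Kfun_1, ln_1; field).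
  apply (min_of_derivative_sign log_gap_d1 log_gap_d2); [| |lra|exact hx].
  - exact is_derive_log_gap_d1.
  - intros c hc. unfold log_gap_d2.
    replace ((c - 1) * ((c - 1) * (c ^ 2 + 6 * c + 1) / (c ^ 2 * (c + 1) ^ 2)))
      with ((c - 1) ^ 2 * (c ^ 2 + 6 * c + 1) / (c ^ 2 * (c + 1) ^ 2)) by (field; lra).
    apply Rdiv_le_0_compat.
    + apply Rmult_le_pos; [apply pow2_ge_0|nra].
    + apply Rmult_lt_0_compat; nra.
Qed.

(* F is nondecreasing and F(1) = 0, so F has the sign of x - 1. *)
Lemma log_gap_sign (x : R) : 0 < x -> 0 <= (x - 1) * log_gap x.
Proof.
  intro hx.
  apply (sign_of_nondecreasing log_gap log_gap_d1); [| |lra| |exact hx].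
  - exact is_derive_log_gap.
  - exact log_gap_d1_nonneg.
  - unfold log_gap. rewrite ln_Kfun_1, ln_1. ring.
Qed.

(* Right inequality: log K - (A - L)/L = (x-1) F(x) / (2 (x-1)^2). *)
Lemma right_ineq (x : R) : 0 < x -> (Amean x - Lmean x) / Lmean x <= ln (Kfun x).
Proof.
  intro hx. unfold Amean.
  destruct (Req_dec x 1) as [->|h1].
  - unfold Lmean. destruct (Req_EM_T 1 1); [|lra]. rewrite ln_Kfun_1. lra.
  - rewrite (Lmean_ne1 x h1).
    pose proof (ln_sign x hx h1) as hs.
    assert (hl : ln x <> 0) by (intro e; rewrite e in hs; lra).
    assert (hx1 : x - 1 <> 0) by lra.
    apply Rminus_le.
    replace (((x + 1) / 2 - (x - 1) / ln x) / ((x - 1) / ln x) - ln (Kfun x))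
      with (- ((x - 1) * log_gap x / (2 * (x - 1) ^ 2)))
      by (unfold log_gap; field; auto).
    assert (0 <= (x - 1) * log_gap x / (2 * (x - 1) ^ 2)).
    { apply Rdiv_le_0_compat; [apply log_gap_sign; lra|].
      assert (0 < (x - 1) ^ 2) by (apply pow2_gt_0; lra). lra. }
    lra.
Qed.

Theorem lemma3p2 (x : R) (hx : 0 < x) :
  (Lmean x ^ 2 - Gmean x ^ 2) / (2 * Lmean x ^ 2)
    <= (Amean x - Lmean x) / Lmean x
  /\ (Amean x - Lmean x) / Lmean x <= ln (Kfun x).
Proof.
  split.
  - apply left_ineq_of_quadratic; [exact (Lmean_pos x hx)|].
    apply quadratic_nonpos.
    + unfold Amean, Gmean. pose proof (sqrt_pos x). lra.
    + exact (Rlt_le _ _ (Lmean_pos x hx)).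
    + exact (Lmean_le_AG x hx).
  - exact (right_ineq x hx).
Qed.
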